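(* Consider the following regulation game. A random triple $(\theta,s,d)$ (agent type, training state, deployment state) has joint distribution $\pi$. Prediction functions are vectors $f\in\mathbb{R}^n$. Given $s$ (and $\theta$), expected agent utility and expected principal welfare are $\overline{U}_\theta(f;s) = -(f-\bar u)'\overline{\Omega}_U(f-\bar u)$ and $\overline{W}(f;s) = -(f-\bar w)'\overline{\Omega}_W(f-\bar w)$, with bliss points $\bar u=\bar u(s,\theta)$, $\bar w=\bar w(s)\in\mathbb{R}^n$ and symmetric positive semidefinite weight matrices. The principal first (knowing only $\pi$) chooses a linear explainer, i.e. a $k\times n$ real matrix $\mathcal{E}$, and possibly an ex-ante restriction $\mathcal{F}=\{f: Af=a\}$ with $A\in\mathbb{R}^{m\times n}$, $a\in\mathbb{R}^m$ not depending on $s,\theta$; after observing $s$ she dictates the value $\mathcal{E}f=e(s)$ of the explanation (failing the audit has infinite cost to the agent). The agent, knowing $\theta$ and $s$, chooses $f$ maximizing $\overline{U}_\theta(f;s)$ subject to $Af=a$ and $\mathcal{E}f=e(s)$. Assume $\overline{\Omega}_U$ is fixed (non-random) and of full rank, and that $\operatorname{rank}\mathop{E}_\pi[(\bar u-\bar w)(\bar u-\bar w)']\le k$. Then there is an explainer that achieves the first-best solution $f=\bar w$ of the principal, yielding maximal expected welfare $\overline{W}(f;s)\equiv 0$ across all states and for all agent types. Further, the optimal solution does not include any ex-ante restrictions.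
   Context: The first-best solution is the principal's bliss point $f=\bar w(s)$. *)

From HB Require Import structures.
From mathcomp Require Import all_boot all_order all_algebra.
From mathcomp Require Import all_classical all_reals all_analysis.
Set Implicit Arguments. Unset Strict Implicit. Unset Printing Implicit Defensive.
Import Order.TTheory GRing.Theory Num.Theory.
Local Open Scope ring_scope.

Definition quad_payoff (R : realType) (n : nat) (Om : 'M[R]_n) (b f : 'cV[R]_n) : R :=
  - ((f - b)^T *m Om *m (f - b)) 0 0.

Definition sym_psd (R : realType) (n : nat) (Om : 'M[R]_n) : Prop :=
  Om^T = Om /\ forall x : 'cV[R]_n, 0 <= (x^T *m Om *m x) 0 0.

(* f solves the agent's problem: maximize quad_payoff OmU ub subject to the
   audit constraint  Ex f = e  (no ex-ante restriction A f = a). *)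
Definition agent_best_response (R : realType) (n k : nat) (OmU : 'M[R]_n)
    (ub : 'cV[R]_n) (Ex : 'M[R]_(k, n)) (e : 'cV[R]_k) (f : 'cV[R]_n) : Prop :=
  Ex *m f = e /\
  forall g : 'cV[R]_n, Ex *m g = e -> quad_payoff OmU ub g <= quad_payoff OmU ub f.

Definition second_moment (R : realType) (d : measure_display) (T : measurableType d)
    (P : probability T R) (n : nat) (v : T -> 'cV[R]_n) : 'M[R]_n :=
  \matrix_(i, j) fine (\int[P]_(w in setT) ((v w i 0 * v w j 0)%:E))%E.

From HB Require Import structures.
From mathcomp Require Import all_boot all_order all_algebra.
From mathcomp Require Import all_classical all_reals all_analysis.
From mathcomp Require Import ring lra.
Set Implicit Arguments. Unset Strict Implicit. Unset Printing Implicit Defensive.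
Import Order.TTheory GRing.Theory Num.Theory.
Local Open Scope ring_scope.

(* Write D = ubar - wbar and M = E[D D'].  Since E[(x'D)^2] = x'Mx, every x in
   the kernel of M is almost surely orthogonal to D.  As rank (M OmU) <= k, there
   is an explainer Ex : k x n whose kernel lies in that of M OmU, so every h with
   Ex h = 0 satisfies h' OmU D = 0 almost surely.  Dictating e = Ex wbar, the
   feasible f are wbar + h with Ex h = 0, and for them the agent's loss is
   h' OmU h + D' OmU D: the cross term vanishes, so the agent's unique optimum
   (OmU is positive definite) is the principal's bliss point h = 0. *)

Lemma mxrank_factor (F : fieldType) (m n k : nat) (A : 'M[F]_(m, n)) :
  (\rank A <= k)%N -> exists (C : 'M[F]_(m, k)) (E : 'M[F]_(k, n)), A = C *m E.
Proof.
move=> rk; exists (col_base A *m pid_mx (\rank A)), (pid_mx (\rank A) *m row_base A).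
rewrite mulmxA -(mulmxA (col_base A)) mul_pid_mx minnn (minn_idPr rk).
by rewrite pid_mx_1 mulmx1 mulmx_base.
Qed.

Lemma coef_linear_eq0_of_quadratic_ge0 (R : realFieldType) (c q : R) :
  (forall t, 0 <= 2 * t * c + t ^+ 2 * q) -> c = 0.
Proof.
move=> ge0; have q_ge0 : 0 <= q by have := ge0 1; have := ge0 (-1); lra.
pose t := - c / (q + 1).
have tq : t * (q + 1) = - c by rewrite /t mulfVK // gt_eqF // ltr_pwDr.
have := ge0 t; nra.
Qed.

Section MatrixForm.
Variables (R : realFieldType) (n : nat).
Implicit Types (O : 'M[R]_n) (x y : 'cV[R]_n).

Definition mxform O x y : R := (x^T *m O *m y) 0 0.

Lemma mxformC O x y : O^T = O -> mxform O x y = mxform O y x.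
Proof.
move=> sO; rewrite /mxform -[in RHS]sO.
transitivity ((y^T *m O^T *m x)^T 0 0); last by rewrite mxE.
by rewrite !trmx_mul !trmxK mulmxA.
Qed.

Lemma mxform_subl O x y z : mxform O (x - y) z = mxform O x z - mxform O y z.
Proof. by rewrite /mxform raddfB /= !mulmxBl !mxE. Qed.

Lemma mxform_subr O x y z : mxform O z (x - y) = mxform O z x - mxform O z y.
Proof. by rewrite /mxform mulmxBr !mxE. Qed.

Lemma mxformZl O a x y : mxform O (a *: x) y = a * mxform O x y.
Proof. by rewrite /mxform linearZ /= -!scalemxAl mxE. Qed.

Lemma mxformZr O a x y : mxform O x (a *: y) = a * mxform O x y.
Proof. by rewrite /mxform -scalemxAr mxE. Qed.

Lemma mxform_sub O x y : O^T = O ->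
  mxform O (x - y) (x - y) = mxform O x x - 2 * mxform O x y + mxform O y y.
Proof.
by move=> sO; rewrite mxform_subl !mxform_subr (mxformC x y sO); ring.
Qed.

Lemma mxform0 O : mxform O 0 0 = 0.
Proof. by rewrite /mxform mulmx0 mxE. Qed.

Lemma psd_mxform_eq0 O x : O^T = O -> (forall y, 0 <= mxform O y y) ->
  mxform O x x = 0 -> O *m x = 0.
Proof.
move=> sO psdO xx0.
have yx0 y : mxform O y x = 0.
  apply: coef_linear_eq0_of_quadratic_ge0 (mxform O y y) _ => t.
  have := psdO (x - (- t) *: y); rewrite mxform_sub // xx0.
  by rewrite mxformZl !mxformZr (mxformC x y sO); lra.
apply/matrixP => i j; rewrite ord1 [RHS]mxE -(yx0 (delta_mx i 0)).
by rewrite /mxform trmx_delta -rowE -row_mul [RHS]mxE.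
Qed.
End MatrixForm.

Lemma psd_mxform_eq0_full_rank (R : realFieldType) n (O : 'M[R]_n) (x : 'cV[R]_n) :
  O^T = O -> (forall y, 0 <= mxform O y y) -> \rank O = n ->
  mxform O x x = 0 -> x = 0.
Proof.
move=> sO psdO rO /(psd_mxform_eq0 sO psdO) Ox0.
have uO : O \in unitmx by rewrite -row_free_unit /row_free rO.
by rewrite -[x]mul1mx -(mulVmx uO) -mulmxA Ox0 mulmx0.
Qed.

Section AgentProblem.
Variables (R : realType) (n k : nat) (O : 'M[R]_n) (Ex : 'M[R]_(k, n)).
Implicit Types (ub wb f g : 'cV[R]_n).

Lemma quad_payoff_bliss b : quad_payoff O b b = 0.
Proof. by rewrite /quad_payoff subrr mulmx0 mxE oppr0. Qed.

Lemma quad_payoffE ub wb g : O^T = O ->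
  quad_payoff O ub g = - mxform O (g - wb) (g - wb)
    + 2 * mxform O (g - wb) (ub - wb) - mxform O (ub - wb) (ub - wb).
Proof.
move=> sO; rewrite /quad_payoff -/(mxform O _ _).
have -> : g - ub = (g - wb) - (ub - wb) by rewrite opprB addrA subrK.
by rewrite mxform_sub //; ring.
Qed.

Hypotheses (psdO : sym_psd O) (rO : \rank O = n).

Lemma agent_best_response_bliss ub wb :
  (forall h, Ex *m h = 0 -> mxform O h (ub - wb) = 0) ->
  forall f, agent_best_response O ub Ex (Ex *m wb) f <-> f = wb.
Proof.
move: psdO => [sO O_ge0] orth f.
have payoff_audited g : Ex *m g = Ex *m wb ->
    quad_payoff O ub g = - mxform O (g - wb) (g - wb) - mxform O (ub - wb) (ub - wb).
  move=> audit; rewrite (quad_payoffE _ wb) // orth ?mulr0 ?addr0 //.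
  by rewrite mulmxBr audit subrr.
have payoff_wb := payoff_audited wb erefl; rewrite subrr mxform0 in payoff_wb.
split=> [[audit best]|->].
  apply/eqP; rewrite -subr_eq0; apply/eqP/(psd_mxform_eq0_full_rank sO O_ge0 rO).
  have := best wb erefl; rewrite payoff_wb payoff_audited //.
  by have := O_ge0 (f - wb); rewrite -/(mxform _ _ _); lra.
split=> // g audit; rewrite payoff_wb payoff_audited //.
by have := O_ge0 (g - wb); rewrite -/(mxform _ _ _); lra.
Qed.

End AgentProblem.

Section SecondMoment.
Variables (R : realType) (d : measure_display) (T : measurableType d).
Variables (P : probability T R) (n : nat) (D : T -> 'cV[R]_n).
Hypothesis D_sqr_integrable :
  forall i j : 'I_n, P.-integrable setT (fun w => (D w i 0 * D w j 0)%:E).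

Local Notation M := (second_moment P D).

Lemma second_moment_tr : M^T = M.
Proof.
apply/matrixP => i j; rewrite !mxE; congr fine; apply: eq_integral => w _.
by rewrite mulrC.
Qed.

Lemma sqr_mulmx_expand (v : 'rV[R]_n) :
  (fun w => (((v *m D w) 0 0) ^+ 2)%:E) =
  (fun w => \sum_(j < n) \sum_(i < n) ((v 0 i * v 0 j)%:E * (D w i 0 * D w j 0)%:E))%E.
Proof.
apply/funext => w; rewrite expr2 [X in X * _]mxE big_distrl /= -sumEFin.
apply: eq_bigr => j _; rewrite mxE big_distrr /= -sumEFin.
by apply: eq_bigr => i _; rewrite -EFinM; congr EFin; ring.
Qed.

Lemma sqr_mulmx_integrable (v : 'rV[R]_n) :
  P.-integrable setT (fun w => (((v *m D w) 0 0) ^+ 2)%:E).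
Proof.
rewrite sqr_mulmx_expand; apply: integrable_sum => // j _.
by apply: integrable_sum => // i _; exact: integrableZl.
Qed.

Lemma integral_sqr_mulmx (v : 'rV[R]_n) :
  (\int[P]_(w in setT) (((v *m D w) 0 0) ^+ 2)%:E = ((v *m M *m v^T) 0 0)%:E)%E.
Proof.
rewrite sqr_mulmx_expand integral_sum //; last first.
  by move=> j; apply: integrable_sum => // i _; exact: integrableZl.
transitivity (\sum_(j < n) \sum_(i < n) ((v 0 i * v 0 j * M i j)%:E))%E.
  apply: eq_bigr => j _; rewrite integral_sum //; last by move=> i; exact: integrableZl.
  apply: eq_bigr => i _; rewrite integralZl // [in RHS]EFinM; congr (_ * _)%E.
  by rewrite mxE fineK //; exact: integrable_fin_num.
under eq_bigr do rewrite sumEFin.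
rewrite sumEFin mxE; congr EFin; apply: eq_bigr => j _; rewrite !mxE big_distrl /=.
by apply: eq_bigr => i _; rewrite mxE; ring.
Qed.

Lemma second_moment_form_eq0_ae (v : 'rV[R]_n) :
  (v *m M *m v^T) 0 0 = 0 -> {ae P, forall w, (v *m D w) 0 0 = 0}.
Proof.
move=> vMv0.
have := ae_eq_integral_abs P measurableT (measurable_int _ (sqr_mulmx_integrable v)).
under eq_integral do rewrite gee0_abs ?lee_fin ?sqr_ge0 //.
rewrite integral_sqr_mulmx vMv0 => /proj1/(_ erefl).
by apply: filterS => w /(_ I) /eqP; rewrite eqe sqrf_eq0 => /eqP.
Qed.

Lemma second_moment_ker_ae :
  {ae P, forall w, forall x : 'cV[R]_n, M *m x = 0 -> (x^T *m D w) 0 0 = 0}.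
Proof.
pose K := kermx M.
have K_ae i : {ae P, forall w, (row i K *m D w) 0 0 = 0}.
  apply: second_moment_form_eq0_ae.
  by rewrite -row_mul mulmx_ker row0 mul0mx mxE.
have := filter_forall (ae_filter_ringOfSetsType P) K_ae.
apply: filterS => w rows_orth x Mx0.
have /submxP [y ->] : (x^T <= K)%MS.
  by apply/sub_kermxP; rewrite -second_moment_tr -trmx_mul Mx0 trmx0.
have KD0 : K *m D w = 0.
  by apply/matrixP => i j; rewrite ord1 [RHS]mxE -(rows_orth i) -row_mul [RHS]mxE.
by rewrite -mulmxA KD0 mulmx0 mxE.
Qed.

End SecondMoment.

Theorem proposition1 (R : realType) (d : measure_display) (Omega : measurableType d)
    (P : probability Omega R) (Theta S : Type)
    (theta : Omega -> Theta) (s : Omega -> S)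
    (n k : nat)
    (ubar : S -> Theta -> 'cV[R]_n) (wbar : S -> 'cV[R]_n)
    (OmU : 'M[R]_n) (OmW : S -> 'M[R]_n) :
  sym_psd OmU -> \rank OmU = n ->
  (forall x, sym_psd (OmW x)) ->
  (forall i j : 'I_n, P.-integrable setT
     (fun w => (((ubar (s w) (theta w) - wbar (s w)) i 0
                * (ubar (s w) (theta w) - wbar (s w)) j 0)%R)%:E)) ->
  (\rank (second_moment P (fun w => (ubar (s w) (theta w) - wbar (s w))%R)) <= k)%N ->
  exists (Ex : 'M[R]_(k, n)) (e : S -> 'cV[R]_k),
    {ae P, forall w,
      forall f : 'cV[R]_n,
        agent_best_response OmU (ubar (s w) (theta w)) Ex (e (s w)) f <->
        (f = wbar (s w) /\ quad_payoff (OmW (s w)) (wbar (s w)) f = 0)}.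
Proof.
(* Welfare vanishes at its bliss point for any weight. *)
move=> psdU rankU _ D_sqr_integrable rankM.
set D := fun w => ubar (s w) (theta w) - wbar (s w).
set M := second_moment P D.
have [C [Ex MU_eq]] := mxrank_factor (leq_trans (mxrankM_maxl M OmU) rankM).
exists Ex, (fun x => Ex *m wbar x).
apply: filterS (second_moment_ker_ae D_sqr_integrable) => w D_orth f.
rewrite agent_best_response_bliss //.
  by split=> [->|[]//]; rewrite quad_payoff_bliss.
move=> h Exh0; rewrite /mxform -[OmU]psdU.1 -trmx_mul D_orth //.
by rewrite mulmxA MU_eq -mulmxA Exh0 mulmx0.
Qed.
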